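(* Let $N\ge 0$, $k\ge1$ be integers and $f:\{0,\dots,N\}^k\to\{\mathbf{true},\mathbf{false}\}$ a feasibility function. Then $\textsc{ParetoEnumerate}(N,k,f)$ (with arbitrary choices of the picked element in each iteration) terminates, and at the end of its main loop the set $P$ it returns is exactly the set of all Pareto points of $f$.
   Context: For $\vec x,\vec x'\in\{0,\dots,N\}^k$, $\vec x\le_k\vec x'$ iff $x_i\le x'_i$ for all $i$; $\vec x$ is smaller than $\vec x'$ (and $\vec x'$ greater than $\vec x$) if $\vec x\le_k\vec x'$ and $\vec x\neq\vec x'$. A feasibility function is a monotone $f:\{0,\dots,N\}^k\to\{\mathbf{true},\mathbf{false}\}$: if $f(\vec x)=\mathbf{true}$ then $f(\vec x')=\mathbf{true}$ for all $\vec x'$ greater than $\vec x$. A Pareto point of $f$ is an $\vec x$ with $f(\vec x)=\mathbf{true}$ and $f(\vec x')=\mathbf{false}$ for all $\vec x'$ smaller than $\vec x$. Procedure $\textsc{SearchParetoPoint}(\vec x,k,f)$: for $i=1,\dots,k$: set $\mathit{max}:=x_i+1$, $\mathit{min}:=0$; while $\mathit{max}-\mathit{min}>1$: $\mathit{mid}:=\mathit{min}+\lfloor(\mathit{max}-\mathit{min}-1)/2\rfloor$, $x_i:=\mathit{mid}$, and if $f(\vec x)=\mathbf{true}$ then $\mathit{max}:=\mathit{mid}+1$ else $\mathit{min}:=\mathit{mid}+1$; then $x_i:=\mathit{min}$. Return $\vec x$. Procedure $\textsc{ParetoEnumerate}(N,k,f)$: initialize $S:=\{(N,\dots,N)\}$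 and $P:=\emptyset$. Main loop: while $S\neq\emptyset$: pick (without removing) some $\vec x\in S$; if $f(\vec x)=\mathbf{true}$, then set $\vec x:=\textsc{SearchParetoPoint}(\vec x,k,f)$, set $P:=P\cup\{\vec x\}$, set $S':=\emptyset$, and for each $\vec y\in S$: if not $\vec x\le_k\vec y$, add $\vec y$ to $S'$; otherwise, for each $i\in\{1,\dots,k\}$ with $x_i>0$, add $(y_1,\dots,y_{i-1},x_i-1,y_{i+1},\dots,y_k)$ to $S'$; then set $S$ to the set of elements of $S'$ that are not smaller than any other element of $S'$. Otherwise (if $f(\vec x)=\mathbf{false}$), set $S:=S\setminus\{\vec x\}$. When the loop ends, return $P$. *)

From mathcomp Require Import all_boot.
From Stdlib Require Import Relations.
Set Implicit Arguments. Unset Strict Implicit. Unset Printing Implicit Defensive.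

(* Vectors in {0,...,N}^k : coordinates indexed by 'I_k (coordinate i+1 of
   the paper is index i here), values in 'I_N.+1 = {0,...,N}. *)
Definition vec (N k : nat) := {ffun 'I_k -> 'I_N.+1}.

Section Pareto.
Variables (N k : nat).
Local Notation V := (vec N k).

Definition lek (x x' : V) : bool := [forall i, x i <= x' i].
Definition smaller (x x' : V) : bool := lek x x' && (x != x').

Definition feasibility (f : V -> bool) : Prop :=
  forall x x' : V, smaller x x' -> f x -> f x'.

Definition pareto_points (f : V -> bool) : {set V} :=
  [set x | f x && [forall x', smaller x' x ==> ~~ f x']].

Definition set_coord (x : V) (i : 'I_k) (v : 'I_N.+1) : V :=
  [ffun j => if j == i then v else x j].

Variable f : V -> bool.

(* The inner while loop of SearchParetoPoint for coordinate i, run with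
   [fuel] iterations at most; returns the final value of [min].
   Each iteration strictly decreases max - min, so fuel = x_i + 1 (the
   initial value of max - min) is always enough: the fuel never runs out. *)
Fixpoint bsearch (x : V) (i : 'I_k) (fuel mn mx : nat) : nat :=
  match fuel with
  | 0 => mn
  | fuel'.+1 =>
      if 1 < mx - mn then
        let mid := mn + (mx - mn - 1) %/ 2 in
        if f (set_coord x i (inord mid)) then bsearch x i fuel' mn mid.+1
        else bsearch x i fuel' mid.+1 mx
      else mn
  end.

(* one iteration of the for loop: max := x_i + 1, min := 0, loop, x_i := min *)
Definition search_coord (x : V) (i : 'I_k) : V :=
  set_coord x i (inord (bsearch x i (x i).+1 0 (x i).+1)).

Definition SearchParetoPoint (x : V) : V :=
  foldl search_coord x (enum 'I_k).

Definition update_S (S : {set V}) (x : V) : {set V} :=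
  let S' := \bigcup_(y in S)
              (if ~~ lek x y then [set y]
               else [set set_coord y i (inord (x i).-1) | i in [set i | 0 < x i]]) in
  [set y in S' | ~~ [exists z in S', smaller y z]].

Definition state := ({set V} * {set V})%type.

Definition init_state : state := ([set [ffun _ => ord_max]], set0).

Inductive step : state -> state -> Prop :=
| step_true (S P : {set V}) (x : V) :
    x \in S -> f x ->
    step (S, P) (update_S S (SearchParetoPoint x), P :|: [set SearchParetoPoint x])
| step_false (S P : {set V}) (x : V) :
    x \in S -> ~~ f x ->
    step (S, P) (S :\ x, P).

(* Termination for every choice sequence: no infinite chain of steps *)
Definition terminates : Prop := Acc (fun t s => step s t) init_state.

Definition reachable (s : state) : Prop := clos_refl_trans state step init_state s.

End Pareto.

(* Maintain the invariant: P consists of Pareto points, every Pareto point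
   outside P lies below some element of S, and nothing in P lies below an
   element of S. After a true step with new Pareto point y, the points below
   the new S are exactly the points below the old S that do not lie above y,
   and no Pareto point other than y lies above y; after a false step nothing
   below the discarded infeasible x was feasible. The last clause gives
   termination: the new y lies below the picked element of S, hence is not
   yet in P, so a true step enlarges P while a false step shrinks S. Once S
   is empty, no Pareto point can be missing from P. *)

From mathcomp Require Import all_boot zify.
From Stdlib Require Import Relations.
Set Implicit Arguments. Unset Strict Implicit. Unset Printing Implicit Defensive.

Section ProductOrder.
Variables N k : nat.
Local Notation V := (vec N k).

Lemma lek_refl (x : V) : lek x x.
Proof. exact/forallP. Qed.

Lemma lek_trans (x y z : V) : lek x y -> lek y z -> lek x z.
Proof.
by move=> /forallP lexy /forallP leyz; apply/forallP=> i; apply: leq_trans (leyz i).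
Qed.

Lemma lek_anti (x y : V) : lek x y -> lek y x -> x = y.
Proof.
move=> /forallP lexy /forallP leyx; apply/ffunP=> i; apply/val_inj/eqP.
by rewrite eqn_leq lexy leyx.
Qed.

Lemma lekPn (x y : V) : ~~ lek x y -> exists i, y i < x i.
Proof. by case/forallPn=> i; rewrite -ltnNge; exists i. Qed.

Lemma smaller_ltn (x y : V) : smaller x y -> exists i, x i < y i.
Proof.
case/andP=> lexy neqxy; apply: lekPn; apply: contra neqxy => leyx.
by rewrite (lek_anti lexy leyx).
Qed.

Lemma smaller_sum (x y : V) : smaller x y -> \sum_i (x i : nat) < \sum_i (y i : nat).
Proof.
move=> ltxy; have [i ltxyi] := smaller_ltn ltxy; case/andP: ltxy => /forallP lexy _.
rewrite (bigD1 i) //= [X in _ < X](bigD1 i) //= -addSn leq_add //.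
by apply: leq_sum => j _; apply: lexy.
Qed.

Lemma exists_maximal_above (A : {set V}) (u : V) : u \in A ->
  exists2 v, v \in [set y in A | ~~ [exists z in A, smaller y z]] & lek u v.
Proof.
move=> Au; pose B := [set w in A | lek u w].
have Bu : u \in B by rewrite inE Au lek_refl.
case: (@arg_maxnP _ u [in B] (fun w => \sum_i (w i : nat)) Bu) => v.
rewrite inE => /andP[Av leuv] maxv; exists v => //.
rewrite inE Av; apply/exists_inP=> -[z Az ltvz].
have /maxv : z \in B by rewrite inE Az (lek_trans leuv (proj1 (andP ltvz))).
by rewrite /= leqNgt smaller_sum.
Qed.

Lemma set_coordE (x : V) i v j : set_coord x i v j = if j == i then v else x j.
Proof. by rewrite ffunE. Qed.

Lemma set_coord_lek (x y : V) i (v : 'I_N.+1) :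
  v <= y i -> lek x y -> lek (set_coord x i v) y.
Proof.
move=> levy /forallP lexy; apply/forallP=> j; rewrite set_coordE.
by case: eqP => [->|].
Qed.

Lemma lek_set_coord (x y : V) i (v : 'I_N.+1) :
  x i <= v -> lek x y -> lek x (set_coord y i v).
Proof.
move=> lexv /forallP lexy; apply/forallP=> j; rewrite set_coordE.
by case: eqP => [->|].
Qed.

Lemma set_coord_mono (x : V) i (v w : 'I_N.+1) :
  v <= w -> lek (set_coord x i v) (set_coord x i w).
Proof. by move=> levw; apply/forallP=> j; rewrite !set_coordE; case: eqP. Qed.

Lemma inord_pred (a : 'I_N.+1) : (inord a.-1 : 'I_N.+1) = a.-1 :> nat.
Proof. by rewrite inordK //; have := ltn_ord a; lia. Qed.

End ProductOrder.

Section SearchParetoPoint.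
Variables (N k : nat) (f : vec N k -> bool).
Hypothesis f_feasibility : feasibility f.
Local Notation V := (vec N k).

Lemma feasible_lek (x y : V) : lek x y -> f x -> f y.
Proof.
move=> lexy fx; case: (eqVneq x y) => [<- // | neqxy].
by apply: f_feasibility fx; rewrite /smaller lexy neqxy.
Qed.

Section Bisection.
Variables (x : V) (i : 'I_k).
Let g v := f (set_coord x i (inord v)).

Lemma feasible_set_coord_mono v w : v <= w <= N -> g v -> g w.
Proof.
move=> /andP[levw lewN]; apply/feasible_lek/set_coord_mono.
by rewrite !inordK //; lia.
Qed.

Lemma bsearch_spec fuel mn mx :
  mn < mx <= N.+1 -> mx - mn <= fuel.+1 -> g mx.-1 ->
  (forall v, v < mn -> ~~ g v) ->
  let r := bsearch f x i fuel mn mx in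
  [/\ r < mx, g r & forall v, v < r -> ~~ g v].
Proof.
elim: fuel mn mx => [|fuel IH] mn mx /andP[ltmn lemxN] lefuel gmx below /=.
  have stop : mn = mx.-1 by lia.
  by rewrite stop in below *; split=> //; lia.
case: ifP => [gap | /negbT nogap]; last first.
  have stop : mn = mx.-1 by lia.
  by rewrite stop in below *; split=> //; lia.
set mid := mn + (mx - mn - 1) %/ 2.
case: ifP => gmid.
  have [] := IH mn mid.+1 _ _ gmid below; [lia | lia | move=> ltr gr minr].
  by split=> //; lia.
apply: IH => //; [lia | lia | move=> v ltv].
case: (ltnP v mn) => [/below // | lemnv]; apply: contraFN gmid.
by apply: feasible_set_coord_mono; apply/andP; split; lia.
Qed.

End Bisection.

Lemma search_coord_spec (x : V) i : f x ->
  [/\ f (search_coord f x i), lek (search_coord f x i) x &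
      forall z, lek z x -> z i < search_coord f x i i -> ~~ f z].
Proof.
move=> fx; rewrite /search_coord.
have fxi : f (set_coord x i (inord (x i).+1.-1)).
  by rewrite inord_val; congr f: fx; apply/ffunP=> j; rewrite set_coordE; case: eqP => [->|].
have := @bsearch_spec x i (x i).+1 0 (x i).+1 (ltn_ord (x i)) (leqW (leq_subr _ _)) fxi.
set r := bsearch f x i (x i).+1 0 (x i).+1 => -[// | ltr fr minr].
have leN : r < N.+1 by have := ltn_ord (x i); lia.
split=> //; first by apply: set_coord_lek (lek_refl x); rewrite inordK.
move=> z lezx; rewrite set_coordE eqxx inordK // => ltz.
apply: contra (minr _ ltz); apply: feasible_lek.
by apply: lek_set_coord lezx; rewrite inordK.
Qed.

Lemma foldl_search_coord_spec (s : seq 'I_k) (x : V) : f x ->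
  let y := foldl (search_coord f) x s in
  [/\ f y, lek y x & forall i, i \in s -> forall z, lek z y -> z i < y i -> ~~ f z].
Proof.
elim: s x => [|j s IH] x fx /=; first by split=> //; apply: lek_refl.
have [fx' lex'x minx'] := search_coord_spec j fx.
have [fy leyx' miny] := IH _ fx'; split=> //; first exact: lek_trans lex'x.
move=> i; rewrite inE => /orP[/eqP-> | si] z lezy ltz; last exact: miny si _ lezy ltz.
apply: minx'; first by apply: lek_trans lex'x; apply: lek_trans leyx'.
exact: leq_trans ltz (forallP leyx' j).
Qed.

Lemma SearchParetoPoint_spec (x : V) : f x ->
  lek (SearchParetoPoint f x) x /\ SearchParetoPoint f x \in pareto_points f.
Proof.
move=> fx; have [fy leyx miny] := foldl_search_coord_spec (enum 'I_k) fx.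
split=> //; rewrite inE fy; apply/forallP=> z; apply/implyP=> ltzy.
have [i ltzyi] := smaller_ltn ltzy.
by apply: miny ltzyi; rewrite ?mem_enum //; case/andP: ltzy.
Qed.

Lemma pareto_feasible (p : V) : p \in pareto_points f -> f p.
Proof. by rewrite inE => /andP[]. Qed.

Lemma pareto_not_above (p y : V) :
  p \in pareto_points f -> f y -> lek y p -> y = p.
Proof.
rewrite inE => /andP[_ /forallP/(_ y)] minp fy leyp; apply/eqP.
by move: minp; rewrite /smaller leyp fy; case: eqP.
Qed.

End SearchParetoPoint.

Section MainLoop.
Variables (N k : nat) (f : vec N k -> bool).
Hypothesis f_feasibility : feasibility f.
Local Notation V := (vec N k).

Definition covered (S : {set V}) (z : V) := [exists y in S, lek z y].

Lemma coveredP (S : {set V}) (z : V) :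
  reflect (exists2 y, y \in S & lek z y) (covered S z).
Proof. exact: exists_inP. Qed.

Lemma covered_subset (S T : {set V}) (z : V) :
  S \subset T -> covered S z -> covered T z.
Proof. by move=> /subsetP ST /coveredP[y /ST Ty lezy]; apply/coveredP; exists y. Qed.

Definition candidates (S : {set V}) (x : V) : {set V} :=
  \bigcup_(y in S) (if ~~ lek x y then [set y]
     else [set set_coord y i (inord (x i).-1) | i in [set i | 0 < x i]]).

Lemma covered_update_S_candidates (S : {set V}) (x z : V) :
  covered (update_S S x) z = covered (candidates S x) z.
Proof.
apply/idP/idP => [|/coveredP[y Sy lezy]].
  by apply: covered_subset; apply/subsetP=> y; rewrite inE => /andP[].
have [v maxv leyv] := exists_maximal_above Sy.
by apply/coveredP; exists v; [exact: maxv | exact: lek_trans leyv].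
Qed.

Lemma covered_candidates (S : {set V}) (x z : V) :
  covered (candidates S x) z = covered S z && ~~ lek x z.
Proof.
apply/coveredP/andP => [[u /bigcupP[w Sw Uu] lezu] | [/coveredP[w Sw lezw] nlexz]].
  move: Uu; case: ifPn => [nlexw /set1P eq_uw | /negPn lexw /imsetP[j]].
    subst u; split; first by apply/coveredP; exists w.
    by apply: contra nlexw => lexz; apply: lek_trans lezu.
  rewrite inE => xj_pos eq_u; subst u.
  have := forallP lezu j; rewrite set_coordE eqxx inord_pred => lezj.
  split; last by apply/negP=> /forallP/(_ j); lia.
  apply/coveredP; exists w => //; apply: lek_trans lezu _.
  by apply: set_coord_lek (lek_refl w); rewrite inord_pred; have := forallP lexw j; lia.
case: (boolP (lek x w)) => [lexw | nlexw]; last first.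
  by exists w => //; apply/bigcupP; exists w; rewrite ?nlexw ?set11.
have [j ltzx] := lekPn nlexz.
exists (set_coord w j (inord (x j).-1)).
  by apply/bigcupP; exists w; rewrite // lexw; apply/imsetP; exists j; rewrite // inE; lia.
by apply: lek_set_coord lezw; rewrite inord_pred; lia.
Qed.

Lemma covered_update_S (S : {set V}) (x z : V) :
  covered (update_S S x) z = covered S z && ~~ lek x z.
Proof. by rewrite covered_update_S_candidates covered_candidates. Qed.

Definition loop_invariant (s : state N k) : Prop :=
  [/\ s.2 \subset pareto_points f,
      forall p, p \in pareto_points f -> p \notin s.2 -> covered s.1 p &
      forall p, p \in s.2 -> ~~ covered s.1 p].

Lemma loop_invariant_init : loop_invariant (init_state N k).
Proof.
split=> [|p _ _|p]; rewrite ?sub0set ?inE //.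
apply/coveredP; exists [ffun => ord_max]; first by rewrite set11.
by apply/forallP=> i; rewrite ffunE leq_ord.
Qed.

Lemma step_loop_invariant (s t : state N k) :
  step f s t -> loop_invariant s -> loop_invariant t.
Proof.
case=> {s t} S P x Sx fx [sub_pareto missing_covered found_uncovered].
- have [_ pareto_y] := SearchParetoPoint_spec f_feasibility fx.
  set y := SearchParetoPoint f x in pareto_y *.
  split=> [|p pareto_p|p] /=; first by rewrite subUset sub1set sub_pareto pareto_y.
    rewrite !inE negb_or covered_update_S => /andP[Pp neq_py].
    rewrite missing_covered //=; apply: contra neq_py => leyp.
    by rewrite (pareto_not_above pareto_p (pareto_feasible pareto_y) leyp).
  rewrite !inE covered_update_S negb_and => /orP[/found_uncovered-> // | /eqP->].
  by rewrite lek_refl orbT.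
- split=> [|p pareto_p Pp|p Pp] //=; last first.
    by apply: contra (found_uncovered p Pp); apply: covered_subset; apply: subsetDl.
  have /coveredP[w Sw lepw] := missing_covered p pareto_p Pp.
  apply/coveredP; exists w => //; rewrite !inE Sw andbT.
  apply: contraNneq fx => eq_wx; rewrite -eq_wx.
  exact: (feasible_lek f_feasibility lepw (pareto_feasible pareto_p)).
Qed.

(* Lexicographic in (#|~: P|, #|S|), as #|S| <= #|V|. *)
Definition loop_measure (s : state N k) := #|~: s.2| * #|V|.+1 + #|s.1|.

Lemma step_loop_measure (s t : state N k) :
  step f s t -> loop_invariant s -> loop_measure t < loop_measure s.
Proof.
case=> {s t} S P x Sx fx [_ _ found_uncovered]; rewrite /loop_measure /=.
- have [leyx _] := SearchParetoPoint_spec f_feasibility fx.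
  set y := SearchParetoPoint f x in leyx *.
  have Py : y \notin P.
    by apply/negP=> /found_uncovered/negP; apply; apply/coveredP; exists x.
  have -> : #|~: P| = #|~: (P :|: [set y])|.+1.
    by rewrite setCU -setDE (cardsD1 y (~: P)) inE Py.
  by rewrite mulSn -addnA addnCA ltn_add2l ltn_addr // ltnS max_card.
- by rewrite ltn_add2l (cardsD1 x S) Sx.
Qed.

Lemma acc_loop_invariant (s : state N k) :
  loop_invariant s -> Acc (fun t s => step f s t) s.
Proof.
move: {2}(loop_measure s) (leqnn (loop_measure s)) => n.
elim: n s => [|n IH] s le_sn inv_s; constructor=> t st;
  have := step_loop_measure st inv_s; first by lia.
by move=> lt_ts; apply: IH (step_loop_invariant st inv_s); lia.
Qed.

Lemma reachable_loop_invariant (s : state N k) :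
  reachable f s -> loop_invariant s.
Proof.
move/clos_rt_rtn1_iff; elim=> [|a b ab _ inv_a]; first exact: loop_invariant_init.
exact: step_loop_invariant ab inv_a.
Qed.

End MainLoop.

Theorem corollary1 (N k : nat) (f : vec N k -> bool) :
  0 < k -> feasibility f ->
  terminates f /\
  (forall s : state N k, reachable f s -> s.1 = set0 ->
     s.2 = pareto_points f).
Proof.
move=> _ f_feasibility; split.
  exact/(acc_loop_invariant f_feasibility)/loop_invariant_init.
move=> [S P] reach /= S0; subst S.
have [sub_pareto missing_covered _] := reachable_loop_invariant f_feasibility reach.
apply/eqP; rewrite eqEsubset sub_pareto; apply/subsetP=> p pareto_p.
by apply: contraT => /(missing_covered p pareto_p)/coveredP[w]; rewrite inE.
Qed.
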